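(* Let $\mathfrak{S}=(\mathcal{X},\mathsf{S},\gamma,(\Lambda_{a})_{a\in\mathcal{A}})$ be a spectral decomposition system for the Euclidean space $\mathfrak{H}$ and let $\mathcal{D}\subset\mathfrak{H}$. Then the following are equivalent: (i) for all $X,Y\in\mathfrak{H}$, if $\gamma(X)=\gamma(Y)$ and $X\in\mathcal{D}$, then $Y\in\mathcal{D}$; (ii) there exists an $\mathsf{S}$-invariant subset $D$ of $\mathcal{X}$ such that $\mathcal{D}=\gamma^{-1}(D)$. Moreover, if (ii) holds, then $D=\Lambda_a^{-1}(\mathcal{D})$ for every $a\in\mathcal{A}$.
   Context: A Euclidean space is a finite-dimensional real inner product space; inner products are written $\langle\cdot,\cdot\rangle$ and norms $\|\cdot\|$. Let $\mathfrak{H}$ and $\mathcal{X}$ be Euclidean spaces, let $\mathsf{S}$ be a group acting on $\mathcal{X}$ by linear isometries, let $\gamma\colon\mathfrak{H}\to\mathcal{X}$, and let $(\Lambda_a)_{a\in\mathcal{A}}$ be a family of linear operators from $\mathcal{X}$ to $\mathfrak{H}$. The orbit of $x$ is $\mathsf{S}\cdot x=\{s\cdot x: s\in\mathsf{S}\}$; a map $f$ on $\mathcal{X}$ is $\mathsf{S}$-invariant if $f(s\cdot x)=f(x)$ for all $s,x$; a subset $D$ of $\mathcal{X}$ is $\mathsf{S}$-invariant if $s\cdot x\in D$ whenever $x\in D$, $s\in\mathsf{S}$. The tuple is a spectral decomposition system for $\mathfrak{H}$ if: [A] every $\Lambda_a$ is an isometry; [B] there exists an $\mathsf{S}$-invariant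 $\tau\colon\mathcal{X}\to\mathcal{X}$ with $\tau(x)\in\mathsf{S}\cdot x$ for all $x$ and $\gamma\circ\Lambda_a=\tau$ for all $a$; [C] for every $X\in\mathfrak{H}$ there is $a$ with $X=\Lambda_a\gamma(X)$; [D] $\langle X,Y\rangle\leq\langle\gamma(X),\gamma(Y)\rangle$ for all $X,Y\in\mathfrak{H}$. *)

From HB Require Import structures.
From mathcomp Require Import all_boot all_order all_algebra.
From mathcomp Require Import boolp classical_sets reals.
Set Implicit Arguments.
Unset Strict Implicit.
Unset Printing Implicit Defensive.
Import Order.TTheory GRing.Theory Num.Theory.
Local Open Scope ring_scope.
Local Open Scope classical_set_scope.

(* A Euclidean space of dimension n is modelled (up to isometric isomorphism)
   as the row space 'rV[R]_n with the standard inner product. *)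
Definition dotv (R : realType) (n : nat) (u v : 'rV[R]_n) : R := (u *m v^T) 0 0.
Definition normv (R : realType) (n : nat) (u : 'rV[R]_n) : R := Num.sqrt (dotv u u).

Definition is_group (G : Type) (mul : G -> G -> G) (one : G) (inv : G -> G) : Prop :=
  [/\ forall a b c, mul a (mul b c) = mul (mul a b) c,
      forall a, mul one a = a,
      forall a, mul a one = a,
      forall a, mul (inv a) a = one
    & forall a, mul a (inv a) = one].

Definition isometric_linear_action (R : realType) (m : nat)
    (G : Type) (mul : G -> G -> G) (one : G) (inv : G -> G)
    (act : G -> 'rV[R]_m -> 'rV[R]_m) : Prop :=
  [/\ is_group mul one inv,
      forall x, act one x = x,
      forall s t x, act (mul s t) x = act s (act t x),
      forall s (c : R) x y, act s (c *: x + y) = c *: act s x + act s y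
    & forall s x, normv (act s x) = normv x].

Definition orbit (R : realType) (m : nat) (G : Type)
    (act : G -> 'rV[R]_m -> 'rV[R]_m) (x : 'rV[R]_m) : set 'rV[R]_m :=
  [set act s x | s in [set: G]].

Definition invariant_fun (R : realType) (m : nat) (G : Type) (T : Type)
    (act : G -> 'rV[R]_m -> 'rV[R]_m) (f : 'rV[R]_m -> T) : Prop :=
  forall s x, f (act s x) = f x.

Definition invariant_set (R : realType) (m : nat) (G : Type)
    (act : G -> 'rV[R]_m -> 'rV[R]_m) (D : set 'rV[R]_m) : Prop :=
  forall s x, D x -> D (act s x).

(* Spectral decomposition system (X = 'rV_m, S = G acting by act, gamma,
   (Lambda a)_{a in A}) for the Euclidean space H = 'rV_n.
   The linear operator Lambda_a : X -> H is the matrix Lambda a : 'M_(m,n),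
   acting by x |-> x *m Lambda a. *)
Definition spectral_decomposition_system (R : realType) (n m : nat)
    (G : Type) (mul : G -> G -> G) (one : G) (inv : G -> G)
    (act : G -> 'rV[R]_m -> 'rV[R]_m)
    (gamma : 'rV[R]_n -> 'rV[R]_m)
    (A : Type) (Lambda : A -> 'M[R]_(m, n)) : Prop :=
  [/\ isometric_linear_action mul one inv act,
      forall a x, normv (x *m Lambda a) = normv x,
      (* [B] *) (exists tau : 'rV[R]_m -> 'rV[R]_m,
                  [/\ invariant_fun act tau,
                      forall x, orbit act x (tau x)
                    & forall a x, gamma (x *m Lambda a) = tau x]),
      (* [C] *) forall X : 'rV[R]_n, exists a, X = gamma X *m Lambda a
    & forall X Y : 'rV[R]_n, dotv X Y <= dotv (gamma X) (gamma Y)].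

From Pilot Require Import Defs.
From HB Require Import structures.
From mathcomp Require Import all_boot all_order all_algebra.
From mathcomp Require Import boolp classical_sets reals.
Set Implicit Arguments.
Unset Strict Implicit.
Unset Printing Implicit Defensive.
Import Order.TTheory GRing.Theory Num.Theory.
Local Open Scope ring_scope.
Local Open Scope classical_set_scope.

(* Axiom [B] gives gamma (x Lambda_a) = tau x, an element of the orbit of x,
   and with [C] it gives tau (gamma X) = gamma X.  Hence an S-invariant D
   is recovered from gamma^-1 D as its preimage under any Lambda_a; and if
   calD is saturated for gamma, then D := Lambda_a^-1 calD is S-invariant
   (tau is) and calD = gamma^-1 D (tau fixes gamma X). *)

Section GroupAction.

Variables (T G : Type) (mul : G -> G -> G) (one : G) (inv : G -> G).
Variable act : G -> T -> T.
Hypothesis mulVg : forall s, mul (inv s) s = one.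
Hypothesis act1 : forall x, act one x = x.
Hypothesis actM : forall s t x, act (mul s t) x = act s (act t x).

Lemma actK s x : act (inv s) (act s x) = x.
Proof. by rewrite -actM mulVg act1. Qed.

Lemma invariant_act_iff (D : set T) :
    (forall s x, D x -> D (act s x)) -> forall s x, D (act s x) <-> D x.
Proof.
move=> invD s x; split; last exact: invD.
by move=> /(invD (inv s)); rewrite actK.
Qed.

End GroupAction.

Section SpectralPreimages.

Variables (R : realType) (n m : nat) (G : Type).
Variable act : G -> 'rV[R]_m -> 'rV[R]_m.
Variable gamma : 'rV[R]_n -> 'rV[R]_m.
Variables (A : Type) (Lambda : A -> 'M[R]_(m, n)).
Variable tau : 'rV[R]_m -> 'rV[R]_m.
Hypothesis gamma_Lambda : forall a x, gamma (x *m Lambda a) = tau x.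

Local Notation Lmap a := (fun x : 'rV[R]_m => x *m Lambda a).

Lemma tau_gamma :
    (forall X, exists a, X = gamma X *m Lambda a) ->
  forall X, tau (gamma X) = gamma X.
Proof. by move=> decomp X; have [a {2}->] := decomp X; rewrite gamma_Lambda. Qed.

Lemma Lambda_preimage_gamma_preimage (D : set 'rV[R]_m) a :
    (forall x, Defs.orbit act x (tau x)) ->
    (forall s x, D (act s x) <-> D x) ->
  Lmap a @^-1` (gamma @^-1` D) = D.
Proof.
move=> tau_orbit invD; apply/funext => x /=; apply/propext.
by rewrite gamma_Lambda; have [s _ <-] := tau_orbit x; exact: invD.
Qed.

Section Saturated.

Variable calD : set 'rV[R]_n.
Hypothesis calD_saturated :
  forall X Y, gamma X = gamma Y -> calD X -> calD Y.

Lemma Lambda_preimage_invariant a :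
    invariant_fun act tau -> invariant_set act (Lmap a @^-1` calD).
Proof.
move=> tau_inv s x /= Dx; apply: calD_saturated Dx.
by rewrite !gamma_Lambda tau_inv.
Qed.

Lemma gamma_preimage_Lambda_preimage a :
    (forall X, tau (gamma X) = gamma X) ->
  calD = gamma @^-1` (Lmap a @^-1` calD).
Proof.
move=> tau_gammaX; apply/funext => X /=; apply/propext.
have eq_gamma : gamma X = gamma (gamma X *m Lambda a).
  by rewrite gamma_Lambda tau_gammaX.
by split; apply: calD_saturated.
Qed.

End Saturated.

End SpectralPreimages.

Theorem corollary4p3 (R : realType) (n m : nat)
    (G : Type) (mul : G -> G -> G) (one : G) (inv : G -> G)
    (act : G -> 'rV[R]_m -> 'rV[R]_m)
    (gamma : 'rV[R]_n -> 'rV[R]_m)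
    (A : Type) (Lambda : A -> 'M[R]_(m, n))
    (Hsds : spectral_decomposition_system mul one inv act gamma Lambda)
    (calD : set 'rV[R]_n) :
  ((forall X Y : 'rV[R]_n, gamma X = gamma Y -> calD X -> calD Y) <->
   (exists D : set 'rV[R]_m, invariant_set act D /\ calD = gamma @^-1` D))
  /\
  (forall D : set 'rV[R]_m, invariant_set act D -> calD = gamma @^-1` D ->
     forall a : A, D = (fun x : 'rV[R]_m => x *m Lambda a) @^-1` calD).
Proof.
have [[[_ _ _ mulVg _] act1 actM _ _] _ [tau [tau_inv tau_orbit gamma_Lambda]]
      decomp _] := Hsds.
have tau_gammaX := tau_gamma gamma_Lambda decomp.
split; first split.
- move=> saturated; have [a _] := decomp 0. (* [C] makes A inhabited. *)
  exists ((fun x => x *m Lambda a) @^-1` calD); split.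
  + exact: Lambda_preimage_invariant.
  + exact: gamma_preimage_Lambda_preimage.
- by move=> [D [_ ->]] X Y /= ->.
- move=> D invD -> a.
  by rewrite (Lambda_preimage_gamma_preimage gamma_Lambda _ tau_orbit
    (invariant_act_iff mulVg act1 actM invD)).
Qed.
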